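(* Let $\varepsilon>0$, $\alpha=\varepsilon/(2M)$, $\eta=\alpha/(L+\alpha)$, $y_0\in\mathrm{dom}\, h$. Run MDA: $s_0=\nabla f(y_0)$, $x_0=\mathrm{argmin}_{x}\{\langle s_0,x\rangle+h^\alpha(x)\}$, and for $k\ge0$, $s_{k+1}=(1-\eta)s_k+\eta\nabla f(x_k)$, $x_{k+1}=\mathrm{argmin}_{x}\{\langle s_{k+1},x\rangle+h^\alpha(x)\}$; and define $y_{k+1}=(1-\eta)y_k+\eta x_{k+1}$ for $k\ge 0$. Let $\Gamma_k$ be the ACP model induced by $(y_0,\{x_i\}_{i=0}^{k-1},(\eta,\dots,\eta))$. Then the pair $(y_k,\Gamma_k)$ is an $\varepsilon$-certificate for the problem $\min_x \phi(x)$ after $k=\tilde{\mathcal{O}}(1+ML\varepsilon^{-1})$ iterations.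
   Context: Let $\|\cdot\|$ be a norm on $\mathbb{R}^n$ with dual norm $\|\cdot\|_*$. Let $f:\mathbb{R}^n\to\mathbb{R}$ be convex, differentiable and $L$-smooth ($L>0$) with respect to $\|\cdot\|$, $h:\mathbb{R}^n\to(-\infty,\infty]$ closed proper convex with bounded domain, and $w:\mathbb{R}^n\to[0,+\infty]$ closed, $1$-strongly convex with respect to $\|\cdot\|$ on $\mathrm{dom}\, h$, with $M:=\max_{x\in\mathrm{dom}\, h}w(x)<\infty$. Let $\phi=f+h$, $h^\alpha=h+\alpha w$, $\phi^\alpha=f+h^\alpha$. Write $\ell_f(x;x_0)=f(x_0)+\langle\nabla f(x_0),x-x_0\rangle$. The ACP model induced by $(y_0,\{x_i\}_{i=0}^{k-1},\zeta)$, $\zeta\in[0,1]^k$, is defined by $\Gamma_0(x)=h^\alpha(x)+\ell_f(x;y_0)$, $\Gamma_{j+1}(x)=(1-\zeta_j)\Gamma_j(x)+\zeta_j(h^\alpha(x)+\ell_f(x;x_j))$. For $u\in\mathrm{dom}\, h$ and $\alpha\le\varepsilon/(2M)$, the pair $(u,\Gamma_k)$ is called an $\varepsilon$-certificate if $\phi^\alpha(u)-\min_{x\in\mathbb{R}^n}\Gamma_k(x)\leq\varepsilon/2$. The notation $\tilde{\mathcal{O}}$ hides logarithmic factors (in $\varepsilon$ and the initial gap). *)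

From HB Require Import structures.
From mathcomp Require Import all_boot all_order all_algebra.
From mathcomp Require Import all_classical all_reals all_analysis.
Set Implicit Arguments. Unset Strict Implicit. Unset Printing Implicit Defensive.
Import Order.TTheory GRing.Theory Num.Theory.
Import numFieldNormedType.Exports.
Local Open Scope classical_set_scope.
Local Open Scope ring_scope.

Section Defs.
Variables (R : realType) (n : nat).
Notation vec := 'rV[R]_n.

Definition dot (u v : vec) : R := \sum_(i < n) u ord0 i * v ord0 i.

Definition is_norm (nrm : vec -> R) : Prop :=
  [/\ forall x, 0 <= nrm x,
      forall x, nrm x = 0 -> x = 0,
      forall (a : R) x, nrm (a *: x) = `|a| * nrm x
    & forall x y, nrm (x + y) <= nrm x + nrm y].

Definition dual_norm (nrm : vec -> R) (s : vec) : R :=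
  sup [set dot s x | x in [set x | nrm x <= 1]].

Definition grad (f : vec -> R) (x : vec) : vec :=
  \row_(j < n) ('d f x (delta_mx ord0 j : vec)).

Definition convex_fun (f : vec -> R) : Prop :=
  forall x y (t : R), 0 <= t <= 1 ->
    f (t *: x + (1 - t) *: y) <= t * f x + (1 - t) * f y.

Definition smooth_wrt (nrm : vec -> R) (L : R) (f : vec -> R) : Prop :=
  forall x y, dual_norm nrm (grad f x - grad f y) <= L * nrm (x - y).

Definition edom (h : vec -> \bar R) : set vec := [set x | (h x < +oo)%E].

Definition closed_efun (h : vec -> \bar R) : Prop :=
  closed [set p : vec * R | (h p.1 <= p.2%:E)%E].

Definition proper_efun (h : vec -> \bar R) : Prop :=
  (forall x, h x != -oo%E) /\ (exists x, (h x < +oo)%E).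

Definition convex_efun (h : vec -> \bar R) : Prop :=
  forall x y (t : R), 0 <= t <= 1 ->
    (h (t *: x + (1 - t) *: y)%R <= t%:E * h x + (1 - t)%:E * h y)%E.

Definition bounded_dom (nrm : vec -> R) (h : vec -> \bar R) : Prop :=
  exists B : R, forall x, edom h x -> nrm x <= B.

Definition strongly_convex_on (nrm : vec -> R) (mu : R) (D : set vec)
    (w : vec -> \bar R) : Prop :=
  forall x y (t : R), D x -> D y -> 0 <= t <= 1 ->
    (w (t *: x + (1 - t) *: y)%R <=
       t%:E * w x + (1 - t)%:E * w y - (mu / 2 * t * (1 - t) * nrm (x - y) ^+ 2)%:E)%E.

Definition halpha (h w : vec -> \bar R) (alpha : R) (x : vec) : \bar R :=
  (h x + alpha%:E * w x)%E.

Definition phialpha (f : vec -> R) (h w : vec -> \bar R) (alpha : R) (x : vec)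
  : \bar R := ((f x)%:E + halpha h w alpha x)%E.

Definition lin (f : vec -> R) (x0 x : vec) : R := f x0 + dot (grad f x0) (x - x0).

Fixpoint acp_model (f : vec -> R) (h w : vec -> \bar R) (alpha : R) (y0 : vec)
    (xs : nat -> vec) (zeta : nat -> R) (k : nat) (x : vec) : \bar R :=
  match k with
  | 0 => (halpha h w alpha x + (lin f y0 x)%:E)%E
  | j.+1 => ((1 - zeta j)%:E * acp_model f h w alpha y0 xs zeta j x
             + (zeta j)%:E * (halpha h w alpha x + (lin f (xs j) x)%:E))%E
  end.

(* minimum value of a model (infimum over R^n; it is attained) *)
Definition emin (G : vec -> \bar R) : \bar R := ereal_inf (range G).

Definition eps_certificate (f : vec -> R) (h w : vec -> \bar R) (M alpha eps : R)
    (u : vec) (G : vec -> \bar R) : Prop :=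
  [/\ edom h u, alpha <= eps / (2 * M)
    & (phialpha f h w alpha u - emin G <= (eps / 2)%:E)%E].

End Defs.

From HB Require Import structures.
From mathcomp Require Import all_boot all_order all_algebra.
From mathcomp Require Import all_classical all_reals all_analysis.
From mathcomp Require Import ring lra.
Set Implicit Arguments. Unset Strict Implicit. Unset Printing Implicit Defensive.
Import Order.TTheory GRing.Theory Num.Theory.
Import numFieldNormedType.Exports.
Local Open Scope classical_set_scope.
Local Open Scope ring_scope.

(* MDA maintains the ACP model Gamma_k(z) = h^alpha(z) + <s_k, z> + c_k on dom h, whose
   minimiser is x_k.  Strong convexity of h^alpha gives Gamma_k quadratic growth around x_k;
   together with the descent lemma for f and the step relation eta L = (1 - eta) alpha, this
   makes the gap phi^alpha(y_k) - min Gamma_k contract by the factor 1 - eta at every step.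
   As eta (2 (1 + M L / eps)) = 1 + eta, after the stated number of iterations
   eta k >= 1 + ln (1 + D / eps), whence (1 - eta)^k D <= e^(-eta k) D <= eps / 2. *)

Section Dot.
Variables (R : realType) (n : nat).
Implicit Types (u v z : 'rV[R]_n) (a : R).

Lemma dotDl u v z : dot (u + v) z = dot u z + dot v z.
Proof. by rewrite /dot -big_split; apply: eq_bigr => j _; rewrite mxE mulrDl. Qed.

Lemma dotZl a u z : dot (a *: u) z = a * dot u z.
Proof. by rewrite /dot mulr_sumr; apply: eq_bigr => j _; rewrite mxE mulrA. Qed.

Lemma dotC u v : dot u v = dot v u.
Proof. by apply: eq_bigr => j _; rewrite mulrC. Qed.

Lemma dotDr u v z : dot z (u + v) = dot z u + dot z v.
Proof. by rewrite dotC dotDl !(dotC z). Qed.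

Lemma dotZr a u z : dot z (a *: u) = a * dot z u.
Proof. by rewrite dotC dotZl dotC. Qed.

Lemma dotBl u v z : dot (u - v) z = dot u z - dot v z.
Proof. by rewrite dotDl -scaleN1r dotZl mulN1r. Qed.

Lemma dotBr u v z : dot z (u - v) = dot z u - dot z v.
Proof. by rewrite dotC dotBl !(dotC z). Qed.

Lemma dot0r z : dot z 0 = 0.
Proof. by rewrite -(scale0r 0) dotZr mul0r. Qed.

Lemma mx_norm_ge_entry z j : `|z ord0 j| <= `|z|.
Proof.
by rewrite [leRHS]/Num.Def.normr /= mx_normrE; apply/bigmax_geP; right; exists (ord0, j).
Qed.

Lemma dot_le_mx_norm u z : dot u z <= (\sum_(j < n) `|u ord0 j|) * `|z|.
Proof.
rewrite /dot mulr_suml; apply: ler_sum => j _.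
by rewrite (le_trans (ler_norm _)) // normrM ler_wpM2l // mx_norm_ge_entry.
Qed.

Lemma diff_dot_grad (f : 'rV[R]_n -> R) x d : 'd f x d = dot (grad f x) d.
Proof.
rewrite {1}(row_sum_delta d) linear_sum; apply: eq_bigr => j _.
by rewrite linearZ /= mxE mulrC.
Qed.

End Dot.

Section Norm.
Variables (R : realType) (n : nat) (nrm : 'rV[R]_n -> R).
Hypothesis nrmP : is_norm nrm.
Implicit Types (u x y z : 'rV[R]_n).

Lemma nrm_ge0 x : 0 <= nrm x. Proof. by case: nrmP. Qed.

Lemma nrmZ a x : nrm (a *: x) = `|a| * nrm x. Proof. by case: nrmP. Qed.

Lemma ler_nrmD x y : nrm (x + y) <= nrm x + nrm y. Proof. by case: nrmP. Qed.

Lemma nrm_gt0 x : x != 0 -> 0 < nrm x.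
Proof.
move=> x0; rewrite lt_def nrm_ge0 andbT; apply: contra_neq x0.
by case: nrmP => _ nrm_eq0 _ _ /nrm_eq0.
Qed.

Lemma nrm0 : nrm 0 = 0.
Proof. by rewrite -(scale0r 0) nrmZ normr0 mul0r. Qed.

Lemma nrmN x : nrm (- x) = nrm x.
Proof. by rewrite -scaleN1r nrmZ normrN1 mul1r. Qed.

Lemma ler_nrm_sum (I : Type) (r : seq I) (F : I -> 'rV[R]_n) :
  nrm (\sum_(i <- r) F i) <= \sum_(i <- r) nrm (F i).
Proof.
elim: r => [|a r IH]; first by rewrite !big_nil nrm0.
by rewrite !big_cons (le_trans (ler_nrmD _ _)) // lerD2l.
Qed.

Lemma nrm_le_mx_norm : exists2 K, 0 < K & forall x, nrm x <= K * `|x|.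
Proof.
exists (\sum_(j < n) nrm (delta_mx ord0 j) + 1).
  by rewrite ltr_pwDr // sumr_ge0 // => j _; apply: nrm_ge0.
move=> x; rewrite {1}(row_sum_delta x) (le_trans (ler_nrm_sum _ _)) //.
rewrite mulrDl mul1r big_distrl /= ler_wpDr ?normr_ge0 //.
apply: ler_sum => j _; rewrite nrmZ mulrC ler_wpM2l ?nrm_ge0 //.
exact: mx_norm_ge_entry.
Qed.

Lemma nrm_continuous : continuous nrm.
Proof.
have [K K0 nrmK] := nrm_le_mx_norm.
have nrm_lip x y : `|nrm x - nrm y| <= K * `|x - y|.
  have := ler_nrmD (x - y) y; have := ler_nrmD (y - x) x.
  rewrite !subrK -opprB nrmN; have := nrmK (x - y).
  by rewrite ler_norml; lra.
move=> x; apply/(@cvgrPdist_lt _ _ _ (nbhs x) (nbhs_filter x)) => e e0.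
apply/nbhs_ballP; exists (e / K) => /=; first by rewrite divr_gt0.
move=> y; rewrite mx_norm_ball /ball_ /= => xy.
by rewrite (le_lt_trans (nrm_lip _ _)) // mulrC -ltr_pdivlMr.
Qed.

Lemma mx_norm_le_nrm : exists2 c, 0 < c & forall x, c * `|x| <= nrm x.
Proof.
pose S := [set x : 'rV[R]_n | `|x| = 1].
have S_normalize x : x != 0 -> S (`|x|^-1 *: x).
  move=> x0; rewrite /S /= normrZ normrV ?unitfE ?normr_eq0 // normr_id.
  by rewrite mulVf // normr_eq0.
have [[z Sz]|S0] := pselect (S !=set0); last first.
  exists 1 => // x; rewrite mul1r.
  have [->|x0] := eqVneq x 0; first by rewrite normr0 nrm0.
  by exfalso; apply: S0; exists (`|x|^-1 *: x); apply: S_normalize.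
have S_compact : compact S.
  apply: bounded_closed_compact.
    by exists 1; split=> // r r1 x; rewrite /S /= => ->; apply: ltW.
  have -> : S = (fun x : 'rV[R]_n => `|x|) @^-1` [set 1] by [].
  by apply: preimage_closed => [x _|]; [exact: norm_continuous|exact: closed_eq].
have [c /set_mem Sc cmin] :=
  compact_EVT_min (ex_intro _ z Sz) S_compact (continuous_subspaceT nrm_continuous).
have c0 : c != 0 by apply: contra_eq_neq Sc => ->; rewrite normr0 eq_sym oner_neq0.
exists (nrm c) => [|x]; first exact: nrm_gt0.
have [->|x0] := eqVneq x 0; first by rewrite normr0 mulr0 nrm0.
have := cmin _ (mem_set (S_normalize x x0)).
rewrite nrmZ normrV ?unitfE ?normr_eq0 // normr_id => min_c.
by rewrite -ler_pdivlMr ?normr_gt0 // mulrC.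
Qed.

Lemma dot_le_dual_norm u z : dot u z <= dual_norm nrm u * nrm z.
Proof.
have [c c0 nrmc] := mx_norm_le_nrm.
have sup_dot : has_sup [set dot u x | x in [set x | nrm x <= 1]].
  split; first by exists (dot u 0), 0; rewrite //= nrm0.
  exists ((\sum_(j < n) `|u ord0 j|) / c) => _ [x /= x1 <-].
  rewrite (le_trans (dot_le_mx_norm _ _)) // ler_pdivlMr // -mulrA.
  apply: ler_piMr; first by apply: sumr_ge0 => j _; apply: normr_ge0.
  by rewrite mulrC (le_trans (nrmc x)).
have [->|z0] := eqVneq z 0; first by rewrite dot0r nrm0 mulr0.
have z_gt0 := nrm_gt0 z0.
have : dot u ((nrm z)^-1 *: z) <= dual_norm nrm u.
  apply: sup_upper_bound => //; exists ((nrm z)^-1 *: z) => //=.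
  by rewrite nrmZ ger0_norm ?invr_ge0 ?nrm_ge0 // mulVf ?gt_eqF.
by rewrite dotZr -ler_pdivlMl ?invr_gt0 // invrK mulrC.
Qed.

End Norm.

Section Descent.
Variables (R : realType) (n : nat) (f : 'rV[R]_n -> R).
Hypothesis f_diff : forall x, differentiable f x.

Lemma is_derive_along_line (x d : 'rV[R]_n) (t : R) :
  is_derive t 1 (fun s : R => f (s *: d + x)) (dot (grad f (t *: d + x)) d).
Proof.
have shift_line : (fun h : R => h^-1 *: (f ((h *: 1 + t) *: d + x) - f (t *: d + x))) =
    (fun h : R => h^-1 *: (f (h *: d + (t *: d + x)) - f (t *: d + x))).
  by apply: funext => h; rewrite scalerDl /GRing.scale /= mulr1 addrA.
apply: DeriveDef; rewrite /derivable /derive /= shift_line.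
  exact: diff_derivable.
by rewrite -[lim _]/(derive f (t *: d + x) d) deriveE // diff_dot_grad.
Qed.

Variables (nrm : 'rV[R]_n -> R) (L : R).
Hypotheses (nrmP : is_norm nrm) (f_smooth : smooth_wrt nrm L f).

Lemma smooth_descent (x y : 'rV[R]_n) :
  f y <= f x + dot (grad f x) (y - x) + L / 2 * nrm (y - x) ^+ 2.
Proof.
set d := y - x; set a := dot (grad f x) d; set c := L / 2 * nrm d ^+ 2.
pose p : R -> R := a \*: id + c \*: (id * id).
pose g := (fun s : R => f (s *: d + x)) - p.
have p_derive (s : R) : is_derive s 1 p (a *: 1 + c *: (s *: 1 + s *: 1)) by exact: _.
have g_derive (s : R) :
    is_derive s 1 g (dot (grad f (s *: d + x)) d - (a *: 1 + c *: (s *: 1 + s *: 1))).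
  by apply: is_deriveB; exact: is_derive_along_line.
have g_cont : {within `[0, 1], continuous g}.
  by apply: derivable_within_continuous => s _; exact: (@ex_derive _ _ _ _ _ _ _ (g_derive s)).
have [xi xi01 g10] := MVT ltr01 (fun s _ => g_derive s) g_cont.
have xi_ge0 : 0 <= xi by move: xi01; rewrite in_itv /= => /andP[/ltW].
have grad_gap : dot (grad f (xi *: d + x)) d - a <= L * xi * nrm d ^+ 2.
  rewrite /a -dotBl (le_trans (dot_le_dual_norm nrmP _ _)) //.
  have := f_smooth (xi *: d + x) x; rewrite addrK => /(ler_wpM2r (nrm_ge0 nrmP d)).
  by rewrite nrmZ // ger0_norm // expr2 !mulrA.
move: g10; rewrite /g /p !fctE /= scale1r scale0r add0r /d subrK -/d.
rewrite /GRing.scale /= !(mulr0, mulr1, addr0, subr0) => g10.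
suff : f y - (a + c) - f x <= 0 by rewrite /c; lra.
by rewrite g10 /c; lra.
Qed.

End Descent.

Section RealBounds.
Variable R : realType.

Lemma ler_of_le_addM01 (x y q : R) :
  0 <= q -> (forall t, 0 < t <= 1 -> x <= y + q * t) -> x <= y.
Proof.
move=> q_ge0 le_xy; apply/ler_addgt0Pr => e e_gt0.
have [q0|q_neq0] := eqVneq q 0.
  have := le_xy 1; rewrite ltr01 lexx q0 mul0r addr0 => /(_ isT) le_xy1.
  by rewrite (le_trans le_xy1) // lerDl ltW.
have q_gt0 : 0 < q by rewrite lt_def q_neq0.
have t01 : 0 < Num.min 1 (e / q) <= 1 by rewrite lt_min ltr01 divr_gt0 //= ge_min lexx.
by rewrite (le_trans (le_xy _ t01)) // lerD2l mulrC -ler_pdivlMr // ge_min lexx orbT.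
Qed.

Lemma geometric_le_half (eta D eps : R) (k : nat) :
  0 < eta -> eta < 1 -> 0 <= D -> 0 < eps ->
  1 + ln (1 + D / eps) <= eta * k%:R -> (1 - eta) ^+ k * D <= eps / 2.
Proof.
move=> eta_gt0 eta_lt1 D_ge0 eps_gt0 k_large.
have pow_le_exp : (1 - eta) ^+ k <= expR (- (eta * k%:R)).
  rewrite mulrC -mulrN expRM_natl lerXn2r ?nnegrE ?expR_ge0 //; last exact: expR_ge1Dx.
  by rewrite subr_ge0 ltW.
have ratio_gt0 : 0 < 1 + D / eps by rewrite ltr_pwDl // divr_ge0 // ltW.
have exp_le : expR (- (eta * k%:R)) <= expR (-1) / (1 + D / eps).
  rewrite -[X in _ / X](lnK (x := 1 + D / eps)) ?posrE // -expRN -expRD ler_expR.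
  lra.
have e_ge2 : 2 <= expR (1 : R) by have := expR_ge1Dx (1 : R).
have D_ratio_le : D / (1 + D / eps) <= eps.
  rewrite ler_pdivrMr // mulrDr mulr1 mulrCA divff ?gt_eqF // mulr1; lra.
rewrite (le_trans (ler_wpM2r D_ge0 (le_trans pow_le_exp exp_le))) //.
rewrite expRN mulrAC -mulrA mulrC (le_trans (ler_wpM2r _ D_ratio_le)) ?invr_ge0 ?expR_ge0 //.
by rewrite ler_pM2l // lef_pV2 ?posrE ?expR_gt0.
Qed.

End RealBounds.

Section MirrorDescent.
Variables (R : realType) (n : nat) (nrm : 'rV[R]_n -> R) (f : 'rV[R]_n -> R).
Variables (h w : 'rV[R]_n -> \bar R) (L alpha eta : R).
Hypotheses (nrmP : is_norm nrm) (f_diff : forall x, differentiable f x).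
Hypotheses (f_convex : convex_fun f) (f_smooth : smooth_wrt nrm L f).
Hypotheses (h_neqNy : forall z, h z != -oo%E) (h_convex : convex_efun h).
Hypotheses (w_ge0 : forall z, (0 <= w z)%E) (w_fin : forall z, edom h z -> (w z < +oo)%E).
Hypothesis w_strong : strongly_convex_on nrm 1 (edom h) w.
Hypotheses (alpha_gt0 : 0 < alpha) (eta_gt0 : 0 < eta) (eta_lt1 : eta < 1).
Hypothesis eta_L : eta * L <= (1 - eta) * alpha.

Variables (y0 : 'rV[R]_n) (s x y : nat -> 'rV[R]_n).
Hypotheses (y0_dom : edom h y0) (s0 : s 0%N = grad f y0).
Hypothesis x_argmin : forall k z,
  ((dot (s k) (x k))%:E + halpha h w alpha (x k) <= (dot (s k) z)%:E + halpha h w alpha z)%E.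
Hypothesis s_next : forall k, s k.+1 = (1 - eta) *: s k + eta *: grad f (x k).
Hypotheses (y_0 : y 0%N = y0) (y_next : forall k, y k.+1 = (1 - eta) *: y k + eta *: x k.+1).

Local Notation Gamma := (acp_model f h w alpha y0 x (fun=> eta)).

Let eta01 : 0 <= 1 - eta <= 1. Proof. by rewrite subr_ge0 gerBl !ltW. Qed.

(* The real value of h^alpha on dom h; [fine] makes it junk elsewhere. *)
Definition Hreg (z : 'rV[R]_n) : R := fine (h z) + alpha * fine (w z).

Lemma edom_EFin z : edom h z ->
  exists hz wz : R, [/\ h z = hz%:E, w z = wz%:E & Hreg z = hz + alpha * wz].
Proof.
move=> z_dom; have h_fin : h z \is a fin_num by rewrite fin_numE h_neqNy lt_eqF.
have w_fin_z : w z \is a fin_num by rewrite ge0_fin_numE // w_fin.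
by exists (fine (h z)), (fine (w z)); rewrite !fineK.
Qed.

Lemma halpha_dom z : edom h z -> halpha h w alpha z = (Hreg z)%:E.
Proof. by case/edom_EFin => hz [wz [hzE wzE ->]]; rewrite /halpha hzE wzE. Qed.

Lemma halpha_out z : ~ edom h z -> halpha h w alpha z = +oo%E.
Proof.
move=> /negP; rewrite /edom /= -leNgt leye_eq => /eqP h_oo.
by rewrite /halpha h_oo addye // gt_eqF // (lt_le_trans ltNy0) // mule_ge0 // lee_fin ltW.
Qed.

Lemma edom_convex p q t : edom h p -> edom h q -> 0 <= t <= 1 ->
  edom h (t *: p + (1 - t) *: q).
Proof.
move=> /edom_EFin[hp [_ [hpE _ _]]] /edom_EFin[hq [_ [hqE _ _]]] t01.
by rewrite /edom /= (le_lt_trans (h_convex p q t01)) // hpE hqE -!EFinM -EFinD ltry.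
Qed.

Lemma Hreg_strongly_convex p q t : edom h p -> edom h q -> 0 <= t <= 1 ->
  Hreg (t *: p + (1 - t) *: q) <=
    t * Hreg p + (1 - t) * Hreg q - alpha / 2 * t * (1 - t) * nrm (p - q) ^+ 2.
Proof.
move=> p_dom q_dom t01; have := w_strong p_dom q_dom t01; have := h_convex p q t01.
have [hr [wr [-> -> ->]]] := edom_EFin (edom_convex p_dom q_dom t01).
have [hp [wp [-> -> ->]]] := edom_EFin p_dom.
have [hq [wq [-> -> ->]]] := edom_EFin q_dom.
rewrite -!EFinM -!EFinD !lee_fin => h_ineq /(ler_wpM2l (ltW alpha_gt0)) w_ineq.
lra.
Qed.

Lemma Hreg_convex p q t : edom h p -> edom h q -> 0 <= t <= 1 ->
  Hreg (t *: p + (1 - t) *: q) <= t * Hreg p + (1 - t) * Hreg q.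
Proof.
move=> p_dom q_dom t01; have := Hreg_strongly_convex p_dom q_dom t01.
suff : 0 <= alpha / 2 * t * (1 - t) * nrm (p - q) ^+ 2 by lra.
case/andP: t01 => t0 t1.
have alpha2_ge0 : 0 <= alpha / 2 by rewrite divr_ge0 // ltW.
apply: mulr_ge0; last exact: sqr_ge0.
by apply: mulr_ge0; [exact: mulr_ge0 | rewrite subr_ge0].
Qed.

Fixpoint model_const (k : nat) : R :=
  if k is j.+1 then (1 - eta) * model_const j + eta * (f (x j) - dot (grad f (x j)) (x j))
  else f y0 - dot (grad f y0) y0.

Lemma acp_model_dom k z : edom h z -> Gamma k z = (Hreg z + dot (s k) z + model_const k)%:E.
Proof.
move=> z_dom; elim: k => [|k IH] /=.
  by rewrite halpha_dom // -EFinD /lin s0 dotBr; congr EFin; ring.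
rewrite IH halpha_dom // -EFinD; congr EFin.
by rewrite /lin s_next dotDl !dotZl dotBr; ring.
Qed.

Lemma acp_model_out k z : ~ edom h z -> Gamma k z = +oo%E.
Proof.
move=> z_out; elim: k => [|k IH] /=; first by rewrite halpha_out.
by rewrite IH halpha_out // addye // !gt0_muley ?lte_fin ?subr_gt0.
Qed.

Lemma iterate_dom k : edom h (x k).
Proof.
apply: contrapT => xk_out; have := x_argmin k y0.
by rewrite halpha_out // halpha_dom // addey // -EFinD leye_eq.
Qed.

Lemma iterate_argmin k z : edom h z ->
  Hreg (x k) + dot (s k) (x k) <= Hreg z + dot (s k) z.
Proof.
move=> z_dom; have := x_argmin k z; have := iterate_dom k.
by move=> xk_dom; rewrite !halpha_dom // -!EFinD lee_fin addrC [leRHS]addrC.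
Qed.

Definition model_min k := Hreg (x k) + dot (s k) (x k) + model_const k.

Lemma emin_acp_model k : emin (Gamma k) = (model_min k)%:E.
Proof.
apply/eqP; rewrite eq_le; apply/andP; split.
  apply: ereal_inf_lbound; exists (x k) => //.
  by rewrite acp_model_dom //; apply: iterate_dom.
apply: le_ereal_inf_tmp => _ [z _ <-].
have [z_dom|z_out] := pselect (edom h z); last by rewrite acp_model_out // leey.
by rewrite acp_model_dom // lee_fin lerD2r iterate_argmin.
Qed.

Lemma iterate_quadratic_growth k z : edom h z ->
  Hreg (x k) + dot (s k) (x k) + alpha / 2 * nrm (z - x k) ^+ 2 <= Hreg z + dot (s k) z.
Proof.
move=> z_dom; apply: (@ler_of_le_addM01 _ _ _ (alpha / 2 * nrm (z - x k) ^+ 2)).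
  by rewrite mulr_ge0 ?sqr_ge0 // divr_ge0 // ltW.
move=> t /andP[t_gt0 t_le1]; have t01 : 0 <= t <= 1 by rewrite ltW.
have := iterate_argmin k (edom_convex z_dom (iterate_dom k) t01).
have := Hreg_strongly_convex z_dom (iterate_dom k) t01.
rewrite dotDr !dotZr => conv argmin.
by rewrite -(ler_pM2l t_gt0); lra.
Qed.

Lemma average_dom k : edom h (y k).
Proof.
elim: k => [|k IH]; first by rewrite y_0.
have := edom_convex IH (iterate_dom k.+1) eta01.
by rewrite y_next opprB addrCA subrr addr0.
Qed.

Definition gap k := f (y k) + Hreg (y k) - model_min k.

Lemma phialpha_sub_emin k : (phialpha f h w alpha (y k) - emin (Gamma k))%E = (gap k)%:E.
Proof. by rewrite /phialpha halpha_dom ?emin_acp_model //; apply: average_dom. Qed.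

Lemma gap0_ge0 : 0 <= gap 0.
Proof.
have := iterate_argmin 0 y0_dom.
by rewrite /gap /model_min y_0 s0 /=; lra.
Qed.

Lemma gap_contraction k : gap k.+1 <= (1 - eta) * gap k.
Proof.
have min_next : model_min k.+1 = (1 - eta) * (Hreg (x k.+1) + dot (s k) (x k.+1) + model_const k)
    + eta * (Hreg (x k.+1) + f (x k) + dot (grad f (x k)) (x k.+1 - x k)).
  by rewrite /model_min s_next dotDl !dotZl /= dotBr; ring.
have y_conv : (1 - eta) *: y k + (1 - (1 - eta)) *: x k.+1 = y k.+1.
  by rewrite y_next opprB addrCA subrr addr0.
have f_conv := f_convex (y k) (x k.+1) eta01.
have H_conv := Hreg_convex (average_dom k) (iterate_dom k.+1) eta01.
rewrite y_conv opprB addrCA subrr addr0 in f_conv H_conv.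
have growth := ler_wpM2l (andP eta01).1 (iterate_quadratic_growth k (iterate_dom k.+1)).
have descent := ler_wpM2l (ltW eta_gt0) (smooth_descent f_diff nrmP f_smooth (x k) (x k.+1)).
have eta_L_P := ler_wpM2r (sqr_ge0 (nrm (x k.+1 - x k))) eta_L.
rewrite /gap min_next /model_min; lra.
Qed.

Lemma gap_le_geometric k : gap k <= (1 - eta) ^+ k * gap 0.
Proof.
elim: k => [|k IH]; first by rewrite expr0 mul1r.
by rewrite (le_trans (gap_contraction k)) // exprS -mulrA ler_wpM2l // (andP eta01).1.
Qed.

Lemma mda_convergence (D : R) k :
  (phialpha f h w alpha y0 - emin (Gamma 0) <= D%:E)%E ->
  [/\ edom h (y k), 0 <= D &
    (phialpha f h w alpha (y k) - emin (Gamma k) <= ((1 - eta) ^+ k * D)%:E)%E].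
Proof.
rewrite -[X in phialpha _ _ _ _ X]y_0 phialpha_sub_emin lee_fin => gap0_le.
split; [exact: average_dom | exact: le_trans gap0_ge0 gap0_le |].
rewrite phialpha_sub_emin lee_fin (le_trans (gap_le_geometric k)) // ler_wpM2l //.
by rewrite exprn_ge0 // (andP eta01).1.
Qed.

End MirrorDescent.

Section StepSize.
Variables (R : realType) (L M eps alpha eta : R).
Hypotheses (L_gt0 : 0 < L) (M_gt0 : 0 < M) (eps_gt0 : 0 < eps).
Hypotheses (alphaE : alpha = eps / (2 * M)) (etaE : eta = alpha / (L + alpha)).

Lemma mda_stepsize : [/\ 0 < alpha, 0 < eta, eta < 1 & eta * L <= (1 - eta) * alpha].
Proof.
have alpha_gt0 : 0 < alpha by rewrite alphaE divr_gt0 // mulr_gt0.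
have La_gt0 : 0 < L + alpha by rewrite addr_gt0.
split=> //; first by rewrite etaE divr_gt0.
  by rewrite etaE ltr_pdivrMr // mul1r ltrDr.
suff -> : eta * L = (1 - eta) * alpha by [].
by rewrite etaE; field; rewrite gt_eqF.
Qed.

Lemma mda_rate (D : R) (k : nat) : 0 <= D ->
  2 * (1 + M * L / eps) * (1 + ln (1 + D / eps)) <= k%:R ->
  (1 - eta) ^+ k * D <= eps / 2.
Proof.
move=> D_ge0 k_large; have [alpha_gt0 eta_gt0 eta_lt1 _] := mda_stepsize.
have eta_iter : eta * (2 * (1 + M * L / eps)) = 1 + eta.
  by rewrite etaE alphaE; field; rewrite !gt_eqF // addr_gt0 // !mulr_gt0.
have ln_ge0 : 0 <= ln (1 + D / eps) by rewrite ln_ge0 // lerDl divr_ge0 // ltW.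
apply: geometric_le_half => //.
have := ler_wpM2l (ltW eta_gt0) k_large; rewrite !mulrA -[eta * 2 * _](mulrA eta) eta_iter.
nra.
Qed.

End StepSize.

Unset Implicit Arguments.

Theorem theorem3p2 (R : realType) :
  exists C : R, 0 < C /\
  forall (n : nat) (nrm : 'rV[R]_n -> R) (f : 'rV[R]_n -> R)
    (h w : 'rV[R]_n -> \bar R) (L M eps : R),
    is_norm nrm ->
    (forall x, differentiable f x) -> convex_fun f ->
    0 < L -> smooth_wrt nrm L f ->
    proper_efun h -> closed_efun h -> convex_efun h -> bounded_dom nrm h ->
    (forall x, (0 <= w x)%E) -> closed_efun w ->
    strongly_convex_on nrm 1 (edom h) w ->
    (exists2 x, edom h x & w x = M%:E) ->
    (forall x, edom h x -> (w x <= M%:E)%E) ->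
    0 < M ->
    0 < eps ->
    forall (alpha eta : R), alpha = eps / (2 * M) -> eta = alpha / (L + alpha) ->
    forall (y0 : 'rV[R]_n) (s x y : nat -> 'rV[R]_n),
      edom h y0 ->
      s 0%N = grad f y0 ->
      (forall k z, ((dot (s k) (x k))%:E + halpha h w alpha (x k)
                    <= (dot (s k) z)%:E + halpha h w alpha z)%E) ->
      (forall k, s k.+1 = (1 - eta) *: s k + eta *: grad f (x k)) ->
      y 0%N = y0 ->
      (forall k, y k.+1 = (1 - eta) *: y k + eta *: x k.+1) ->
      forall D : R,
        (phialpha f h w alpha y0 - emin (acp_model f h w alpha y0 x (fun _ => eta) 0)
           <= D%:E)%E ->
        forall k : nat,
          C * (1 + M * L / eps) * (1 + ln (1 + D / eps)) <= k%:R ->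
          eps_certificate f h w M alpha eps (y k)
            (acp_model f h w alpha y0 x (fun _ => eta) k).
Proof.
exists 2; split=> // n nrm f h w L M eps nrmP f_diff f_convex L_gt0 f_smooth
  [h_neqNy _] _ h_convex _ w_ge0 _ w_strong _ w_le_M M_gt0 eps_gt0
  alpha eta alphaE etaE y0 s x y y0_dom s0 x_argmin s_next y_0 y_next D gap0_le k k_large.
(* Closedness of h and w, boundedness of dom h and attainment of M only serve the
   existence of the minimisers x_k, which is assumed here. *)
have [alpha_gt0 eta_gt0 eta_lt1 eta_L] := mda_stepsize L_gt0 M_gt0 eps_gt0 alphaE etaE.
have w_fin z : edom h z -> (w z < +oo)%E.
  by move=> /w_le_M /le_lt_trans; apply; rewrite ltry.
have [yk_dom D_ge0 gap_le] := mda_convergence nrmP f_diff f_convex f_smooth h_neqNy h_convex w_ge0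
  w_fin w_strong alpha_gt0 eta_gt0 eta_lt1 eta_L y0_dom s0 x_argmin s_next y_0 y_next k gap0_le.
split=> //; first by rewrite alphaE.
by rewrite (le_trans gap_le) // lee_fin (mda_rate L_gt0 M_gt0 eps_gt0 alphaE etaE).
Qed.
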